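(* For every $k$-regular graph $G$, $\mu(G)\ge k/2$.
   Context: All graphs are finite and simple. For a graph $G=(V,E)$ on $n$ vertices, a fractional vertex cover is a function $f:V\to[0,\infty)$ with $f(u)+f(v)\ge 1$ for every edge $uv\in E$; $\tau^*(G)$ denotes the minimum of $\sum_{v\in V}f(v)$ over all fractional vertex covers. For $E'\subseteq E$ let $G-E'=(V,E\setminus E')$. Define $\mu(G)=\min\{|E'| : E'\subseteq E,\ \tau^*(G-E')<n/2\}$. *)

From mathcomp Require Import all_boot all_order all_algebra.
From mathcomp Require Import all_classical all_reals.
Set Implicit Arguments. Unset Strict Implicit. Unset Printing Implicit Defensive.
Import Order.TTheory GRing.Theory Num.Theory.

Local Open Scope ring_scope.

Section Graphs.
Variable T : finType.

Definition simple_graph (e : rel T) : Prop := symmetric e /\ irreflexive e.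

Definition edges (e : rel T) : {set {set T}} :=
  [set A : {set T} | [exists u, exists v, e u v && (A == [set u; v])]].

Definition remove_edges (e : rel T) (E' : {set {set T}}) : rel T :=
  fun u v => e u v && ([set u; v] \notin E').

Definition k_regular (e : rel T) (k : nat) : Prop :=
  forall v : T, #|[set u | e v u]| = k.

Definition frac_vertex_cover (R : realType) (e : rel T) (f : T -> R) : Prop :=
  (forall v, 0 <= f v) /\ (forall u v, e u v -> 1 <= f u + f v).

Definition tau_star (R : realType) (e : rel T) : R :=
  inf [set x : R | exists f : T -> R, frac_vertex_cover e f /\ x = \sum_(v : T) f v]%classic.

(* The sets E' over which mu(G) minimises. *)
Definition mu_candidate (R : realType) (e : rel T) (E' : {set {set T}}) : Prop :=
  E' \subset edges e /\ tau_star R (remove_edges e E') < #|T|%:R / 2.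

End Graphs.

From mathcomp Require Import all_boot all_order all_algebra.
From mathcomp Require Import reals.
From mathcomp Require Import lra zify.
Import Order.TTheory GRing.Theory Num.Theory.

Set Implicit Arguments.
Unset Strict Implicit.
Unset Printing Implicit Defensive.

(* If 2|E'| < k, double counting the edges leaving a vertex set A in the
   k-regular graph shows that H = G - E' satisfies Hall's condition
   |A| <= |N_H(A)|.  Under Hall's condition every g with g u + g v >= 0 on the
   edges of H has nonnegative sum: the neighbours of {g < 0} lie in {g > 0}, so
   sg g has nonnegative sum, and subtracting min |g| * sg g from g keeps the
   edge condition while shrinking the support.  For a fractional vertex cover
   f of H this applies to g = f - 1/2, hence tau^*(H) >= n/2. *)

Definition neighbours (T : finType) (h : rel T) (A : {set T}) : {set T} :=
  [set w | [exists u in A, h u w]].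

Definition hall_condition (T : finType) (h : rel T) : Prop :=
  forall A : {set T}, #|A| <= #|neighbours h A|.

Section EdgeCounting.
Variable T : finType.

Lemma sum_deg_le_card_neighbours (h : rel T) k (A : {set T}) :
  symmetric h -> (forall w, #|[set u | h w u]| <= k) ->
  \sum_(u in A) #|[set w | h u w]| <= #|neighbours h A| * k.
Proof.
move=> hsym hdeg; under eq_bigr do rewrite -sum1dep_card.
rewrite (exchange_big_dep (mem (neighbours h A))) /=; last first.
  by move=> u w uA huw; rewrite inE; apply/existsP; exists u; rewrite uA.
rewrite -sum_nat_const; apply: leq_sum => w _.
rewrite sum1dep_card; apply: leq_trans (hdeg w); apply: subset_leq_card.
by apply/subsetP => u; rewrite !inE hsym => /andP [].
Qed.

Lemma card_oriented_pairs_le (e : rel T) (E' : {set {set T}}) : irreflexive e ->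
  #|[set p : T * T | e p.1 p.2 && ([set p.1; p.2] \in E')]| <= 2 * #|E'|.
Proof.
move=> eirr; set Q := [set p | _].
pose orient (p : T * T) := ([set p.1; p.2], enum_rank p.1 < enum_rank p.2).
have orient_inj : {in Q &, injective orient}.
  move=> [p1 p2] [q1 q2]; rewrite !inE /= => /andP [ep _] /andP [eq _] [Epq Ebit].
  have neq_p : p1 != p2 by apply: contraTneq ep => ->; rewrite eirr.
  have neq_q : enum_rank q1 != enum_rank q2.
    by apply: contraTneq eq => /enum_rank_inj ->; rewrite eirr.
  move: neq_p Ebit.
  have : p1 \in [set q1; q2] by rewrite -Epq set21.
  have : p2 \in [set q1; q2] by rewrite -Epq set22.
  case/set2P => -> /set2P [] -> //; rewrite ?eqxx //.
  move=> _; case: (ltngtP (enum_rank q1) (enum_rank q2)) neq_q => //.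
  by move=> /ord_inj ->; rewrite eqxx.
rewrite -(card_in_imset orient_inj) mulnC -card_bool -cardsT -cardsX.
apply: subset_leq_card; apply/subsetP => _ /imsetP [p + ->].
by rewrite !inE => /andP [_ ->].
Qed.

Lemma sum_deg_removed_le (e : rel T) (E' : {set {set T}}) : irreflexive e ->
  \sum_u #|[set w | e u w && ([set u; w] \in E')]| <= 2 * #|E'|.
Proof.
move=> eirr; under eq_bigr do rewrite -sum1dep_card.
by rewrite pair_big_dep /= sum1dep_card card_oriented_pairs_le.
Qed.

Lemma hall_remove_edges (e : rel T) k (E' : {set {set T}}) :
  simple_graph e -> k_regular e k -> 2 * #|E'| < k ->
  hall_condition (remove_edges e E').
Proof.
move=> [esym eirr] ereg E'k A; set h := remove_edges e E'.
pose removed u := #|[set w | e u w && ([set u; w] \in E')]|.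
have deg_split u : k = #|[set w | h u w]| + removed u.
  rewrite -(ereg u) -(cardsID [set w | [set u; w] \in E']) addnC /removed.
  by congr (_ + _); apply: eq_card => w; rewrite !inE // andbC.
have hsym : symmetric h by move=> u w; rewrite /h /remove_edges esym setUC.
have hdeg w : #|[set u | h w u]| <= k by rewrite [k](deg_split w) leq_addr.
have removedA : \sum_(u in A) removed u <= 2 * #|E'|.
  apply: leq_trans (sum_deg_removed_le E' eirr).
  by rewrite [X in _ <= X](bigID (mem A)) /= leq_addr.
have : k * #|A| <= #|neighbours h A| * k + 2 * #|E'|.
  rewrite mulnC -sum_nat_const (eq_bigr _ (fun u _ => deg_split u)) big_split /=.
  exact: leq_add (sum_deg_le_card_neighbours A hsym hdeg) removedA.
nia.
Qed.

End EdgeCounting.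

Section HallSums.
Local Open Scope ring_scope.
Variables (R : realFieldType) (T : finType) (h : rel T).
Hypothesis hall : hall_condition h.

Definition nonneg_on_edges (g : T -> R) : Prop :=
  forall u v, h u v -> 0 <= g u + g v.

Lemma card_neg_le_card_pos g : nonneg_on_edges g ->
  (#|[set v | (g v < 0)%R]| <= #|[set v | (0 < g v)%R]|)%N.
Proof.
move=> gE; apply: leq_trans (hall _) (subset_leq_card _).
apply/subsetP => w; rewrite !inE => /existsP [u /andP [+ huw]].
by rewrite inE => gu; have := gE _ _ huw; lra.
Qed.

Lemma sum_sg_ge0 g : nonneg_on_edges g -> 0 <= \sum_v Num.sg (g v).
Proof.
move=> gE.
have -> : \sum_v Num.sg (g v) = #|[set v | 0 < g v]|%:R - #|[set v | g v < 0]|%:R.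
  rewrite -!sum1dep_card !natr_sum.
  rewrite [X in _ = X - _]big_mkcond [X in _ - X]big_mkcond -sumrB.
  apply: eq_bigr => v _; case: (ltrgtP (g v) 0) => [gv|gv|->];
    rewrite ?ltxx ?sgr0 ?(ltr0_sg gv) ?(gtr0_sg gv) ?gv ?(lt_gtF gv) /=; lra.
by rewrite subr_ge0 (ler_nat R) card_neg_le_card_pos.
Qed.

Lemma nonneg_on_edges_shrink g c : nonneg_on_edges g ->
  (forall v, g v != 0 -> c <= `|g v|) ->
  nonneg_on_edges (fun v => g v - c * Num.sg (g v)).
Proof.
move=> gE gc u v huv; have := gE _ _ huv; have := gc u; have := gc v.
case: (ltrgtP (g u) 0) => gu; case: (ltrgtP (g v) 0) => gv;
  rewrite ?(gtr0_sg gu) ?(ltr0_sg gu) ?(gtr0_norm gu) ?(ltr0_norm gu)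
          ?(gtr0_sg gv) ?(ltr0_sg gv) ?(gtr0_norm gv) ?(ltr0_norm gv)
          ?gu ?gv ?sgr0 ?eqxx ?lt_eqF ?gt_eqF //; lra.
Qed.

Lemma support_shrink (g : T -> R) v1 : g v1 != 0 ->
  support (fun v => g v - `|g v1| * Num.sg (g v)) \subset [predD1 support g & v1].
Proof.
move=> gv1; apply/subsetP => v; rewrite !inE; have [->|gv0] := eqVneq (g v) 0.
  by rewrite sgr0 mulr0 subr0 eqxx.
by rewrite andbT; apply: contraNneq => ->; rewrite mulrC -numEsg subrr.
Qed.

Lemma sum_ge0_of_hall g : nonneg_on_edges g -> 0 <= \sum_v g v.
Proof.
have [n] := ubnP #|support g|; elim: n g => // n IH g; rewrite ltnS => gn gE.
have [v0 gv0|g0] := pickP (support g); last first.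
  by rewrite big1 // => v _; apply/eqP; have := g0 v; rewrite inE => /negbFE.
have [v1 gv1 v1min] := arg_minP (fun v => `|g v|) gv0.
set c := `|g v1|.
have -> : \sum_v g v = \sum_v (g v - c * Num.sg (g v)) + c * \sum_v Num.sg (g v).
  by rewrite mulr_sumr -big_split; apply: eq_bigr => v _ /=; rewrite subrK.
apply: addr_ge0; last by rewrite mulr_ge0 ?normr_ge0 ?sum_sg_ge0.
apply: IH; last by apply: nonneg_on_edges_shrink => // v; apply: v1min.
apply: leq_ltn_trans (subset_leq_card (support_shrink gv1)) _.
have v1g : v1 \in support g by [].
by move: gn; rewrite (cardD1 v1 (support g)) v1g.
Qed.

End HallSums.

Local Open Scope ring_scope.

Lemma frac_vertex_cover_sum_ge (R : realType) (T : finType) (h : rel T)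
    (f : T -> R) :
  hall_condition h -> frac_vertex_cover h f -> #|T|%:R / 2 <= \sum_v f v.
Proof.
move=> hall [_ fE].
have gE : nonneg_on_edges h (fun v => f v - 2^-1) by move=> u v /fE; lra.
have := sum_ge0_of_hall hall gE.
by rewrite sumrB sumr_const -mulr_natr; lra.
Qed.

Lemma tau_star_ge_half (R : realType) (T : finType) (h : rel T) :
  hall_condition h -> #|T|%:R / 2 <= tau_star R h.
Proof.
move=> hall; apply: lb_le_inf.
  exists (\sum_(v : T) 1), (fun => 1); split=> //; split=> // u v _; lra.
by move=> _ [f [fC ->]]; apply: frac_vertex_cover_sum_ge.
Qed.

Theorem lemma23 (R : realType) (T : finType) (e : rel T) (k : nat) :
  simple_graph e -> k_regular e k ->
  forall E' : {set {set T}}, mu_candidate R e E' ->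
  (k%:R / 2 : R) <= (#|E'|)%:R.
Proof.
move=> eS eR E' [_ tauE]; rewrite leNgt; apply/negP => kE.
have hallH : hall_condition (remove_edges e E').
  by apply: hall_remove_edges eS eR _; rewrite -(ltr_nat R) natrM; lra.
by move: tauE; rewrite ltNge tau_star_ge_half.
Qed.
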